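(* Let $\mathcal P\subseteq\mathcal G$ be a group property. If $\mathcal P$ has the Baire property as a subset of $\mathcal G$, then $\mathcal P$ is either meager or comeager in $\mathcal G$.
   Context: Let $\mathbb N=\{1,2,3,\dots\}$. Equip $\mathbb N^{\mathbb N\times\mathbb N}$ (the set of infinite tables of natural numbers) with the product topology of the discrete topology on $\mathbb N$. Let $\mathcal G$ be the subspace consisting of those $A\in\mathbb N^{\mathbb N\times\mathbb N}$ that are the multiplication table of a group on the underlying set $\mathbb N$ whose identity element is $1$ (i.e. $A(n,m)$ is the product $n\cdot m$). For $G\in\mathcal G$, $\overline G$ denotes the group on $\mathbb N$ with multiplication table $G$. A group property is a set $\mathcal P\subseteq\mathcal G$ that is invariant under isomorphism: if $G\in\mathcal G$, $H\in\mathcal P$ and $\overline G\cong\overline H$, then $G\in\mathcal P$. A set has the Baire property if it is the symmetric difference of an open set and a meager set. *)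

From Stdlib Require Import Arith.

Definition Npos : Type := { n : nat | 0 < n }.
Definition one : Npos := exist _ 1 Nat.lt_0_1.

Definition table : Type := Npos -> Npos -> Npos.

Definition is_group_table (A : table) : Prop :=
  (forall x y z, A (A x y) z = A x (A y z)) /\
  (forall x, A one x = x /\ A x one = x) /\
  (forall x, exists y, A x y = one /\ A y x = one).

Definition Gsp (A : table) : Prop := is_group_table A.

Definition group_iso (A B : table) : Prop :=
  exists (f g : Npos -> Npos),
    (forall x, g (f x) = x) /\ (forall y, f (g y) = y) /\
    (forall x y, f (A x y) = B (f x) (f y)).

Definition group_property (P : table -> Prop) : Prop :=
  (forall A, P A -> Gsp A) /\
  (forall A B, Gsp A -> P B -> group_iso A B -> P A).

(* A and B agree on the finite block {1..n} x {1..n}; these blocks give the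
   basic open sets (cylinders) of the product of discrete topologies. *)
Definition agree (n : nat) (A B : table) : Prop :=
  forall i j : Npos, proj1_sig i <= n -> proj1_sig j <= n -> A i j = B i j.

(* Open sets of the subspace topology on G (relative to the product topology). *)
Definition openG (U : table -> Prop) : Prop :=
  (forall A, U A -> Gsp A) /\
  (forall A, U A -> exists n, forall B, Gsp B -> agree n A B -> U B).

Definition closureG (S : table -> Prop) (A : table) : Prop :=
  Gsp A /\ forall U, openG U -> U A -> exists B, U B /\ S B.

Definition interiorG (S : table -> Prop) (A : table) : Prop :=
  exists U, openG U /\ U A /\ (forall B, U B -> S B).

Definition nowhere_denseG (S : table -> Prop) : Prop :=
  (forall A, S A -> Gsp A) /\ (forall A, ~ interiorG (closureG S) A).

Definition meagerG (S : table -> Prop) : Prop :=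
  exists F : nat -> table -> Prop,
    (forall k, nowhere_denseG (F k)) /\
    (forall A, S A <-> exists k, F k A).

Definition comeagerG (S : table -> Prop) : Prop :=
  meagerG (fun A => Gsp A /\ ~ S A).

Definition baire_propertyG (S : table -> Prop) : Prop :=
  exists U M, openG U /\ meagerG M /\
    (forall A, S A <-> ((U A /\ ~ M A) \/ (M A /\ ~ U A))).

(* Write P = U Δ M with U open and M meager; if U is empty, P ⊆ M.  Otherwise
   fix A0 in U.  Every basic open set around a group A contains a copy of
   A × A0 that agrees with A there, while swapping the factors relabels it into
   any prescribed neighbourhood of A0.  Hence the groups with a neighbourhood
   that a single relabeling maps into U form a dense open set, and countably
   many relabelings (one per basic open set) suffice.  Relabelings are
   homeomorphisms of G preserving P, so they send a group of that set lying
   outside P into U \ P ⊆ M: the complement of P is covered by a nowhere dense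
   set and countably many relabelled copies of M. *)

From Stdlib Require Import Arith Bool Lia Classical ClassicalEpsilon FunctionalExtensionality.
From Stdlib Require Cantor.
Arguments Cantor.to_nat : simpl never.
Arguments Cantor.of_nat : simpl never.

Definition toN (x : Npos) : nat := proj1_sig x - 1.
Definition ofN (a : nat) : Npos := exist _ (S a) (Nat.lt_0_succ a).

Lemma toN_ofN a : toN (ofN a) = a.
Proof. unfold toN, ofN; simpl; lia. Qed.

Lemma ofN_toN x : ofN (toN x) = x.
Proof.
  destruct x as [[|x] px]; [inversion px|].
  unfold ofN, toN; simpl. rewrite Nat.sub_0_r. f_equal. apply Peano_dec.le_unique.
Qed.

Lemma toN_inj x y : toN x = toN y -> x = y.
Proof. intros H. rewrite <- (ofN_toN x), <- (ofN_toN y), H. reflexivity. Qed.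

Lemma toN_lt (i : Npos) n : proj1_sig i <= n -> toN i < n.
Proof. destruct i as [x px]; unfold toN; simpl; lia. Qed.

Lemma eventually_uniform_on_block (Q : Npos -> nat -> Prop) n :
  (forall i N N', N <= N' -> Q i N -> Q i N') -> (forall i, exists N, Q i N) ->
  exists N, forall i, proj1_sig i <= n -> Q i N.
Proof.
  intros Qmono Qex. induction n as [|n [N1 HN1]].
  - exists 0. intros [i Hi] Hin; simpl in Hin; lia.
  - destruct (Qex (ofN n)) as [N2 HN2]. exists (Nat.max N1 N2). intros i Hi.
    destruct (Nat.le_gt_cases (proj1_sig i) n) as [Hle|Hgt].
    + apply (Qmono i N1); [lia|auto].
    + replace i with (ofN n) by (apply toN_inj; rewrite toN_ofN; unfold toN; lia).
      apply (Qmono _ N2); [lia|auto].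
Qed.

Lemma bounded_on_block (h : Npos -> nat) n :
  exists N, forall i, proj1_sig i <= n -> h i <= N.
Proof.
  apply eventually_uniform_on_block; [intros; lia|]. intros i; exists (h i); lia.
Qed.

Lemma bounded_on_block2 (h : Npos -> Npos -> nat) n :
  exists N, forall i j, proj1_sig i <= n -> proj1_sig j <= n -> h i j <= N.
Proof.
  destruct (eventually_uniform_on_block
              (fun i N => forall j, proj1_sig j <= n -> h i j <= N) n) as [N HN].
  - intros i N N' HN' H j Hj. specialize (H j Hj). lia.
  - intros i. apply bounded_on_block.
  - exists N. auto.
Qed.

Lemma agree_sym n A B : agree n A B -> agree n B A.
Proof. intros H i j hi hj. symmetry; auto. Qed.

Lemma agree_trans n A B C : agree n A B -> agree n B C -> agree n A C.
Proof. intros H1 H2 i j hi hj. rewrite H1; auto. Qed.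

Definition cylG (A : table) (n : nat) (B : table) : Prop := Gsp B /\ agree n A B.

Lemma cylG_center A n : Gsp A -> cylG A n A.
Proof. split; auto. intros i j _ _; reflexivity. Qed.

Lemma cylG_open A n : openG (cylG A n).
Proof.
  split; [intros B []; auto|].
  intros B [_ HB]. exists n. intros C GC HBC. split; [auto|]. eapply agree_trans; eauto.
Qed.

Lemma nowhere_denseP S :
  nowhere_denseG S <->
  (forall A, S A -> Gsp A) /\
  (forall A n, Gsp A -> exists B, cylG A n B /\ exists m, forall C, cylG B m C -> ~ S C).
Proof.
  split.
  - intros [HS Hnd]. split; [exact HS|]. intros A n GA. apply NNPP. intros Hno.
    apply (Hnd A). exists (cylG A n). split; [apply cylG_open|].
    split; [apply cylG_center; auto|].
    intros B HB. split; [apply HB|]. intros V [_ HV] VB.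
    destruct (HV B VB) as [m Hm]. apply NNPP. intros Hnot. apply Hno.
    exists B. split; [auto|]. exists m. intros C [GC BC] SC.
    apply Hnot. exists C. auto.
  - intros [HS H]. split; [exact HS|]. intros A [U [[HU1 HU2] [UA Hsub]]].
    destruct (HU2 A UA) as [n Hn].
    destruct (H A n (HU1 A UA)) as [B [[GB AB] [m Hm]]].
    destruct (Hsub B (Hn B GB AB)) as [_ Hcl].
    destruct (Hcl (cylG B m) (cylG_open B m) (cylG_center B m GB)) as [D [BD SD]].
    exact (Hm D BD SD).
Qed.

Lemma nowhere_denseG_sub S T :
  nowhere_denseG S -> (forall A, T A -> S A) -> nowhere_denseG T.
Proof.
  rewrite !nowhere_denseP. intros [HS H] HT. split; [auto|].
  intros A n GA. destruct (H A n GA) as [B [AB [m Hm]]].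
  exists B. split; [exact AB|]. exists m. intros C BC TC. apply (Hm C BC); auto.
Qed.

Lemma meagerG_nowhere_dense S : nowhere_denseG S -> meagerG S.
Proof.
  intros HS. exists (fun _ => S). split; [auto|]. intros A; split; [exists 0; auto|].
  intros [_ SA]; exact SA.
Qed.

Lemma meagerG_countable_union (S : nat -> table -> Prop) (T : table -> Prop) :
  (forall k, meagerG (S k)) -> (forall A, T A -> exists k, S k A) -> meagerG T.
Proof.
  intros HS HT. destruct (choice _ HS) as [F HF].
  exists (fun c A => T A /\ F (fst (Cantor.of_nat c)) (snd (Cantor.of_nat c)) A). split.
  - intros c. eapply nowhere_denseG_sub; [apply (HF (fst (Cantor.of_nat c)))|].
    intros A [_ FA]; exact FA.
  - intros A. split; [|intros [_ [TA _]]; exact TA].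
    intros TA. destruct (HT A TA) as [k Sk]. apply (proj2 (HF k) A) in Sk.
    destruct Sk as [j Fj]. exists (Cantor.to_nat (k, j)).
    rewrite Cantor.cancel_of_to. auto.
Qed.

Record relabeling := Relabeling {
  fwd : Npos -> Npos;
  bwd : Npos -> Npos;
  bwdK : forall x, bwd (fwd x) = x;
  fwdK : forall y, fwd (bwd y) = y;
  fwd_one : fwd one = one }.

Lemma bwd_one r : bwd r one = one.
Proof. rewrite <- (fwd_one r) at 1. apply bwdK. Qed.

Definition relabeling_id : relabeling :=
  Relabeling (fun x => x) (fun x => x) (fun _ => eq_refl) (fun _ => eq_refl) eq_refl.

Definition relabeling_inv (r : relabeling) : relabeling :=
  Relabeling (bwd r) (fwd r) (fwdK r) (bwdK r) (bwd_one r).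

Definition relabel (r : relabeling) (A : table) : table :=
  fun x y => fwd r (A (bwd r x) (bwd r y)).

Lemma relabelK r A : relabel (relabeling_inv r) (relabel r A) = A.
Proof.
  do 2 (apply functional_extensionality; intro). unfold relabel; simpl.
  rewrite !bwdK. reflexivity.
Qed.

Lemma relabelKV r A : relabel r (relabel (relabeling_inv r) A) = A.
Proof.
  do 2 (apply functional_extensionality; intro). unfold relabel; simpl.
  rewrite !fwdK. reflexivity.
Qed.

Lemma relabel_group r A : Gsp A -> Gsp (relabel r A).
Proof.
  intros [Hassoc [Hid Hinv]]. unfold relabel. split; [|split].
  - intros x y z. rewrite !bwdK, Hassoc. reflexivity.
  - intros x. rewrite bwd_one. destruct (Hid (bwd r x)) as [-> ->]. rewrite fwdK. auto.
  - intros x. destruct (Hinv (bwd r x)) as [y [E1 E2]].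
    exists (fwd r y). rewrite bwdK, E1, E2, fwd_one. auto.
Qed.

Lemma relabel_iso r A : group_iso A (relabel r A).
Proof.
  exists (fwd r), (bwd r). split; [apply bwdK|]. split; [apply fwdK|].
  intros x y. unfold relabel. rewrite !bwdK. reflexivity.
Qed.

Lemma relabel_agree r n :
  exists n', forall X Y, agree n' X Y -> agree n (relabel r X) (relabel r Y).
Proof.
  destruct (bounded_on_block (fun i => proj1_sig (bwd r i)) n) as [N HN]. exists N.
  intros X Y H i j hi hj. unfold relabel. rewrite H; auto.
Qed.

Lemma nowhere_denseG_relabel r S :
  nowhere_denseG S -> nowhere_denseG (fun A => Gsp A /\ S (relabel r A)).
Proof.
  rewrite !nowhere_denseP. intros [HS H]. split; [intros A []; auto|].
  intros A n GA.
  destruct (relabel_agree (relabeling_inv r) n) as [n' Hn'].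
  destruct (H (relabel r A) n' (relabel_group r A GA)) as [B' [[GB' AB'] [m' Hm']]].
  destruct (relabel_agree r m') as [m Hm].
  exists (relabel (relabeling_inv r) B'). split; [split|].
  - apply relabel_group; auto.
  - rewrite <- (relabelK r A) at 1. auto.
  - exists m. intros C [GC BC] [_ SC]. apply (Hm' (relabel r C)); [|exact SC].
    split; [apply relabel_group; auto|]. rewrite <- (relabelKV r B'). auto.
Qed.

Lemma meagerG_relabel r S :
  meagerG S -> meagerG (fun A => Gsp A /\ S (relabel r A)).
Proof.
  intros [F [HF HSF]]. exists (fun k A => Gsp A /\ F k (relabel r A)). split.
  - intros k. apply nowhere_denseG_relabel, HF.
  - intros A. rewrite HSF. split; [intros [GA [k Fk]]|intros [k [GA Fk]]]; eauto.
Qed.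

(* Cantor pairing shifted so that [(a, 0) |-> a] for [a <= N]. *)
Definition pair_fix (N : nat) (p : nat * nat) : nat :=
  let (a, b) := p in
  if (b =? 0) && (a <=? N) then a
  else S N + Cantor.to_nat (if b =? 0 then (a - S N, 0) else (a, b)).

Definition unpair_fix (N z : nat) : nat * nat :=
  if z <=? N then (z, 0) else
  let (a, b) := Cantor.of_nat (z - S N) in
  if b =? 0 then (a + S N, 0) else (a, b).

Lemma unpair_fix_small N z : z <= N -> unpair_fix N z = (z, 0).
Proof. intros H. unfold unpair_fix. destruct (Nat.leb_spec z N); [reflexivity|lia]. Qed.

Lemma unpair_fix_large N c :
  unpair_fix N (S N + Cantor.to_nat c) = if snd c =? 0 then (fst c + S N, 0) else c.
Proof.
  unfold unpair_fix. destruct (Nat.leb_spec (S N + Cantor.to_nat c) N); [lia|].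
  rewrite Nat.add_comm, Nat.add_sub, Cantor.cancel_of_to. destruct c; reflexivity.
Qed.

Lemma unpair_fixK N p : unpair_fix N (pair_fix N p) = p.
Proof.
  destruct p as [a b]. unfold pair_fix.
  destruct (Nat.eqb_spec b 0) as [->|Hb]; [destruct (Nat.leb_spec a N)|];
    cbn [andb Nat.eqb]; [apply unpair_fix_small; auto| |];
    rewrite unpair_fix_large; cbn [fst snd Nat.eqb].
  - f_equal. lia.
  - destruct (Nat.eqb_spec b 0); [lia|reflexivity].
Qed.

Lemma pair_fixK N z : pair_fix N (unpair_fix N z) = z.
Proof.
  unfold unpair_fix. destruct (Nat.leb_spec z N).
  - simpl. destruct (Nat.leb_spec z N); [reflexivity|lia].
  - destruct (Cantor.of_nat (z - S N)) as [a b] eqn:E.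
    destruct (Nat.eqb_spec b 0) as [->|Hb]; simpl.
    + destruct (Nat.leb_spec (a + S N) N); [lia|]. simpl.
      replace (a + S N - S N) with a by lia. rewrite <- E, Cantor.cancel_to_of. lia.
    + destruct (Nat.eqb_spec b 0); [lia|]. simpl. rewrite <- E, Cantor.cancel_to_of. lia.
Qed.

Section PairingOnNpos.
Variable N : nat.

Definition pairP (x y : Npos) : Npos := ofN (pair_fix N (toN x, toN y)).
Definition fstP (z : Npos) : Npos := ofN (fst (unpair_fix N (toN z))).
Definition sndP (z : Npos) : Npos := ofN (snd (unpair_fix N (toN z))).

Lemma pairP_eta z : pairP (fstP z) (sndP z) = z.
Proof.
  unfold pairP, fstP, sndP. rewrite !toN_ofN, <- surjective_pairing, pair_fixK.
  apply ofN_toN.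
Qed.

Lemma fstP_pair x y : fstP (pairP x y) = x.
Proof. unfold pairP, fstP. rewrite toN_ofN, unpair_fixK. apply ofN_toN. Qed.

Lemma sndP_pair x y : sndP (pairP x y) = y.
Proof. unfold pairP, sndP. rewrite toN_ofN, unpair_fixK. apply ofN_toN. Qed.

Lemma fstP_small z : toN z <= N -> fstP z = z.
Proof. intros H. unfold fstP. rewrite unpair_fix_small by exact H. apply ofN_toN. Qed.

Lemma sndP_small z : toN z <= N -> sndP z = one.
Proof. intros H. unfold sndP. rewrite unpair_fix_small by exact H. apply toN_inj. reflexivity. Qed.

Lemma pairP_small x : toN x <= N -> pairP x one = x.
Proof.
  intros H. rewrite <- (fstP_small x H) at 1. rewrite <- (sndP_small x H). apply pairP_eta.
Qed.
End PairingOnNpos.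

Definition prod_table (N : nat) (A A0 : table) : table :=
  fun x y => pairP N (A (fstP N x) (fstP N y)) (A0 (sndP N x) (sndP N y)).

Lemma prod_table_group N A A0 : Gsp A -> Gsp A0 -> Gsp (prod_table N A A0).
Proof.
  intros [Aassoc [Aid Ainv]] [Bassoc [Bid Binv]]. unfold prod_table.
  assert (Hone : toN one <= N) by (unfold toN; simpl; lia).
  split; [|split].
  - intros x y z. rewrite !fstP_pair, !sndP_pair, Aassoc, Bassoc. reflexivity.
  - intros x. rewrite fstP_small, sndP_small by exact Hone.
    destruct (Aid (fstP N x)) as [-> ->]. destruct (Bid (sndP N x)) as [-> ->].
    rewrite pairP_eta. auto.
  - intros x. destruct (Ainv (fstP N x)) as [y1 [E1 E2]].
    destruct (Binv (sndP N x)) as [y2 [F1 F2]].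
    exists (pairP N y1 y2). rewrite !fstP_pair, !sndP_pair, E1, E2, F1, F2, pairP_small by exact Hone.
    auto.
Qed.

Definition swapP (N : nat) (z : Npos) : Npos := pairP N (sndP N z) (fstP N z).

Lemma swapPK N z : swapP N (swapP N z) = z.
Proof. unfold swapP. rewrite fstP_pair, sndP_pair. apply pairP_eta. Qed.

Lemma swapP_one N : swapP N one = one.
Proof.
  assert (Hone : toN one <= N) by (unfold toN; simpl; lia).
  unfold swapP. rewrite fstP_small, sndP_small by exact Hone. apply pairP_small, Hone.
Qed.

Definition swap (N : nat) : relabeling :=
  Relabeling (swapP N) (swapP N) (swapPK N) (swapPK N) (swapP_one N).

Section ProductNearFactors.
Variables (A A0 : table) (n N : nat).
Hypothesis (n_le : n <= N).

Lemma prod_table_agree_l :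
  Gsp A0 -> (forall i j, proj1_sig i <= n -> proj1_sig j <= n -> proj1_sig (A i j) <= N) ->
  agree n A (prod_table N A A0).
Proof.
  intros [_ [Bid _]] HA i j hi hj. unfold prod_table.
  pose proof (toN_lt _ _ hi). pose proof (toN_lt _ _ hj). specialize (HA i j hi hj).
  rewrite !fstP_small, !sndP_small by lia. destruct (Bid one) as [-> _].
  symmetry. apply pairP_small. unfold toN; lia.
Qed.

Lemma prod_table_agree_r :
  Gsp A -> (forall i j, proj1_sig i <= n -> proj1_sig j <= n -> proj1_sig (A0 i j) <= N) ->
  agree n A0 (relabel (swap N) (prod_table N A A0)).
Proof.
  intros [_ [Aid _]] HA0 i j hi hj.
  pose proof (toN_lt _ _ hi). pose proof (toN_lt _ _ hj). specialize (HA0 i j hi hj).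
  assert (Hswap : forall k, toN k <= N -> swapP N k = pairP N one k).
  { intros k Hk. unfold swapP. rewrite fstP_small, sndP_small by exact Hk. reflexivity. }
  unfold relabel, prod_table. simpl. rewrite (Hswap i), (Hswap j) by lia.
  rewrite !fstP_pair, !sndP_pair. destruct (Aid one) as [-> _].
  unfold swapP. rewrite fstP_pair, sndP_pair. symmetry. apply pairP_small. unfold toN; lia.
Qed.
End ProductNearFactors.

Lemma cylG_has_relabeling_near A A0 n n0 :
  Gsp A -> Gsp A0 -> exists B r, cylG A n B /\ agree n0 A0 (relabel r B).
Proof.
  intros GA GA0.
  destruct (bounded_on_block2 (fun i j => proj1_sig (A i j)) n) as [N1 HN1].
  destruct (bounded_on_block2 (fun i j => proj1_sig (A0 i j)) n0) as [N2 HN2].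
  set (N := n + n0 + N1 + N2).
  exists (prod_table N A A0), (swap N). split; [split|].
  - apply prod_table_group; auto.
  - apply prod_table_agree_l; [unfold N; lia|exact GA0|].
    intros i j hi hj. specialize (HN1 i j hi hj). unfold N; lia.
  - apply prod_table_agree_r; [unfold N; lia|exact GA|].
    intros i j hi hj. specialize (HN2 i j hi hj). unfold N; lia.
Qed.

(* [k] codes the sequence [h] as the nested Cantor pairs [<h 0, <h 1, ...>>]. *)
Definition code_nth (k i : nat) : nat :=
  fst (Cantor.of_nat (Nat.iter i (fun k => snd (Cantor.of_nat k)) k)).

Lemma code_nth_surj L : forall h : nat -> nat, exists k, forall i, i <= L -> code_nth k i = h i.
Proof.
  induction L as [|L IH]; intros h.
  - exists (Cantor.to_nat (h 0, 0)). intros i Hi. replace i with 0 by lia.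
    unfold code_nth. simpl. rewrite Cantor.cancel_of_to. reflexivity.
  - destruct (IH (fun i => h (S i))) as [k' Hk']. exists (Cantor.to_nat (h 0, k')).
    intros [|i] Hi; unfold code_nth.
    + simpl. rewrite Cantor.cancel_of_to. reflexivity.
    + rewrite <- (Hk' i) by lia. unfold code_nth.
      rewrite Nat.iter_succ_r, Cantor.cancel_of_to. reflexivity.
Qed.

Definition code_table (k : nat) : table :=
  fun x y => ofN (code_nth k (Cantor.to_nat (toN x, toN y))).

Lemma code_table_dense A m : exists k, agree m (code_table k) A.
Proof.
  destruct (bounded_on_block2 (fun i j => Cantor.to_nat (toN i, toN j)) m) as [L HL].
  destruct (code_nth_surj L (fun c => toN (A (ofN (fst (Cantor.of_nat c)))
                                             (ofN (snd (Cantor.of_nat c)))))) as [k Hk].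
  exists k. intros i j hi hj. unfold code_table.
  rewrite Hk by auto. rewrite Cantor.cancel_of_to. simpl. rewrite !ofN_toN. reflexivity.
Qed.

Definition nbhd_relabels_into (U : table -> Prop) (A : table) : Prop :=
  exists r m, forall C, cylG A m C -> U (relabel r C).

Lemma nbhd_relabels_into_dense U A0 :
  openG U -> U A0 -> nowhere_denseG (fun A => Gsp A /\ ~ nbhd_relabels_into U A).
Proof.
  intros [HUG HU] UA0. destruct (HU A0 UA0) as [n0 Hn0].
  apply nowhere_denseP. split; [intros A []; auto|]. intros A n GA.
  destruct (cylG_has_relabeling_near A A0 n n0 GA (HUG A0 UA0)) as [B [r [AB Hr]]].
  destruct (relabel_agree r n0) as [m Hm].
  exists B. split; [exact AB|]. exists m. intros C [GC BC] [_ HW]. apply HW.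
  exists r, m. intros D [GD CD]. apply Hn0; [apply relabel_group; auto|].
  eapply agree_trans; [exact Hr|]. apply Hm. eapply agree_trans; eauto.
Qed.

Lemma countably_many_relabelings U :
  exists rs : nat -> relabeling,
    forall A, Gsp A -> nbhd_relabels_into U A -> exists c, U (relabel (rs c) A).
Proof.
  set (fits c r := forall C, cylG (code_table (snd (Cantor.of_nat c))) (fst (Cantor.of_nat c)) C ->
                             U (relabel r C)).
  destruct (choice (fun c r => (exists r', fits c r') -> fits c r)) as [rs Hrs].
  { intros c. destruct (classic (exists r', fits c r')) as [[r' Hr']|Hno].
    - exists r'. auto.
    - exists relabeling_id. intros H; contradiction. }
  exists rs. intros A GA [r [m Hr]].
  destruct (code_table_dense A m) as [k Hk].
  set (c := Cantor.to_nat (m, k)).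
  assert (Hc : Cantor.of_nat c = (m, k)) by apply Cantor.cancel_of_to.
  exists c. apply Hrs.
  - exists r. intros C. unfold fits. rewrite Hc. intros [GC HC].
    apply Hr. split; [auto|]. eapply agree_trans; [apply agree_sym, Hk|exact HC].
  - unfold fits. rewrite Hc. split; [exact GA|exact Hk].
Qed.

Theorem theorem5p3 (P : table -> Prop) :
  group_property P -> baire_propertyG P -> meagerG P \/ comeagerG P.
Proof.
  intros [_ Pinv] [U [M [HU [HM HP]]]].
  destruct (classic (exists A0, U A0)) as [[A0 UA0] | HnoU].
  - right. destruct (countably_many_relabelings U) as [rs Hrs].
    apply (meagerG_countable_union
             (fun k A => match k with
                         | 0 => Gsp A /\ ~ nbhd_relabels_into U A
                         | S c => Gsp A /\ M (relabel (rs c) A)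
                         end)).
    + intros [|c].
      * apply meagerG_nowhere_dense, (nbhd_relabels_into_dense U A0 HU UA0).
      * apply meagerG_relabel, HM.
    + intros A [GA nPA]. destruct (classic (nbhd_relabels_into U A)) as [HW|HW].
      2:{ exists 0. auto. }
      destruct (Hrs A GA HW) as [c Uc]. exists (S c). split; [exact GA|].
      apply NNPP. intros nM. apply nPA, (Pinv A (relabel (rs c) A) GA).
      * apply HP. auto.
      * apply relabel_iso.
  - left. apply (meagerG_countable_union (fun _ => M)); [auto|].
    intros A PA. exists 0. apply HP in PA.
    destruct PA as [[UA _]|[MA _]]; [exfalso; eauto|exact MA].
Qed.
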